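(* Let $n$ and $0<n_1<\cdots<n_d<n$ be integers with $m_1=n_1$, $m_k=n_k-n_{k-1}$ ($2\le k\le d$), $m_{d+1}=n-n_d$, and regard $\mathrm{Flag}(n_1,\dots,n_d;n)=\{(VJ_1V^{\mathsf T},\dots,VJ_{d+1}V^{\mathsf T}):V\in\mathrm{O}(n)\}$ as a submanifold of $(\mathbb{R}^{n\times n})^{d+1}$ with the Frobenius inner product. Let $V(t)$ be a differentiable curve in $\mathrm{O}(n)$ with $\Lambda(t)=V(t)^{\mathsf T}\dot V(t)$, $\Lambda(k,k)\equiv0$ ($k=1,\dots,d+1$), $c(t)=V(t)(J_1,\dots,J_{d+1})V(t)^{\mathsf T}$, and let $X(t)\in\mathfrak{so}(n)$ be differentiable with $X(k,k)\equiv0$. Define \begin{align*} T_1(t)&=V(t)\big(\dot XJ_k-J_k\dot X\big)_{k=1}^{d+1}V(t)^{\mathsf T},\\ T_2(t)&=V(t)\big(\Lambda XJ_k+J_kX\Lambda\big)_{k=1}^{d+1}V(t)^{\mathsf T},\\ T_3(t)&=V(t)\big(\Lambda J_kX+XJ_k\Lambda\big)_{k=1}^{d+1}V(t)^{\mathsf T}. \end{align*} Then (1) $T_1(t)\in\mathbb{T}_{c(t)}\mathrm{Flag}(n_1,\dots,n_d;n)$; (2) the orthogonal projection of $T_2(t)$ onto $\mathbb{T}_{c(t)}\mathrm{Flag}(n_1,\dots,n_d;n)$ is $V(t)(W_1(t),\dots,W_{d+1}(t))V(t)^{\mathsf T}$, where \[ W_k(p,q)=\begin{cases}\sum_{s=1}^{d+1}X(k,s)\Lambda(s,q)-\sum_{s=1}^{d+1}\Lambda(s,k)^{\mathsf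 T}X(q,s)^{\mathsf T}, & p=k,\ q\neq k,\\[2pt] \sum_{s=1}^{d+1}\Lambda(s,p)^{\mathsf T}X(k,s)^{\mathsf T}-\sum_{s=1}^{d+1}X(p,s)\Lambda(s,k), & q=k,\ p\neq k,\\[2pt] 0, & \text{otherwise};\end{cases} \] (3) the orthogonal projection of $T_3(t)$ onto $\mathbb{T}_{c(t)}\mathrm{Flag}(n_1,\dots,n_d;n)$ is zero.
   Context: $J_k=\operatorname{diag}(-I_{m_1},\dots,-I_{m_{k-1}},I_{m_k},-I_{m_{k+1}},\dots,-I_{m_{d+1}})$ for $k=1,\dots,d+1$. $V(M_k)_{k=1}^{d+1}V^{\mathsf T}$ denotes $(VM_1V^{\mathsf T},\dots,VM_{d+1}V^{\mathsf T})$. For an $n\times n$ matrix $M$, $M(p,q)$ denotes its $(p,q)$ block in the partition $n=m_1+\cdots+m_{d+1}$. *)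

From mathcomp Require Import all_boot all_order all_algebra.
From mathcomp Require Import all_classical all_reals all_analysis.
Set Implicit Arguments. Unset Strict Implicit. Unset Printing Implicit Defensive.
Import Order.TTheory GRing.Theory Num.Theory.
Local Open Scope ring_scope.

Section FlagDefs.
Variable R : realType.

Definition mxderivable (m p : nat) (F : R -> 'M[R]_(m, p)) (t : R) : Prop :=
  forall i j, derivable (fun s => F s i j) t 1.
Definition mxderive (m p : nat) (F : R -> 'M[R]_(m, p)) (t : R) : 'M[R]_(m, p) :=
  \matrix_(i, j) derive1 (fun s => F s i j) t.

Definition is_orthogonal_mx (n : nat) (V : 'M[R]_n) : Prop := V^T *m V = 1%:M.
Definition is_skew_mx (n : nat) (X : 'M[R]_n) : Prop := X^T = - X.

Variables (n d : nat) (ns : nat -> nat).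
(* ns 1 < ... < ns d are n_1 < ... < n_d.  Row/column index i (0-based) lies in
   block blk i (0-based, in 0..d): blocks are [0,n_1), [n_1,n_2), ..., [n_d,n). *)
Definition blk (i : nat) : nat := (\sum_(1 <= k < d.+1) (ns k <= i : nat))%N.

Definition Jmx (k : 'I_d.+1) : 'M[R]_n :=
  \matrix_(i, j) (if i == j then (if blk i == k then 1 else -1) else 0).

Definition mxtuple := 'I_d.+1 -> 'M[R]_n.

Definition flag_pt (c : mxtuple) : Prop :=
  exists V : 'M[R]_n, is_orthogonal_mx V /\ forall k, c k = V *m Jmx k *m V^T.

Definition tangent_flag (c : mxtuple) (T : mxtuple) : Prop :=
  exists gamma : R -> mxtuple,
    (forall s, flag_pt (gamma s)) /\ (forall k, gamma 0 k = c k) /\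
    (forall k, mxderivable (fun s => gamma s k) 0) /\
    (forall k, mxderive (fun s => gamma s k) 0 = T k).

Definition frob (A B : mxtuple) : R := \sum_(k < d.+1) \tr ((A k)^T *m B k).

Definition is_orth_proj (S : mxtuple -> Prop) (T P : mxtuple) : Prop :=
  S P /\ forall Y, S Y -> frob (fun k => T k - P k) Y = 0.

Variables (V X : R -> 'M[R]_n).

Definition Lam (t : R) : 'M[R]_n := (V t)^T *m mxderive V t.
Definition cflag (t : R) : mxtuple := fun k => V t *m Jmx k *m (V t)^T.
Definition T1 (t : R) : mxtuple := fun k =>
  V t *m (mxderive X t *m Jmx k - Jmx k *m mxderive X t) *m (V t)^T.
Definition T2 (t : R) : mxtuple := fun k =>
  V t *m (Lam t *m X t *m Jmx k + Jmx k *m X t *m Lam t) *m (V t)^T.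
Definition T3 (t : R) : mxtuple := fun k =>
  V t *m (Lam t *m Jmx k *m X t + X t *m Jmx k *m Lam t) *m (V t)^T.

(* W_k, entrywise: entry (i,j) lies in block (p,q) = (blk i, blk j);
   sum_s X(k,s) Lam(s,q) at (i,j) = sum_l X i l * Lam l j, and
   sum_s Lam(s,k)^T X(q,s)^T at (i,j) = sum_l Lam l i * X j l, etc. *)
Definition Wmx (t : R) (k : 'I_d.+1) : 'M[R]_n :=
  \matrix_(i, j)
    if (blk i == k) && (blk j != k) then
      \sum_(l < n) X t i l * Lam t l j - \sum_(l < n) Lam t l i * X t j l
    else if (blk j == k) && (blk i != k) then
      \sum_(l < n) Lam t l i * X t j l - \sum_(l < n) X t i l * Lam t l j
    else 0.
Definition Wt (t : R) : mxtuple := fun k => V t *m Wmx t k *m (V t)^T.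

End FlagDefs.

Arguments Jmx {R n} d ns k.
Arguments flag_pt {R n} d ns c.
Arguments tangent_flag {R n} d ns c T.
Arguments cflag {R n} d ns V t _.
Arguments T1 {R n} d ns V X t _.
Arguments T2 {R n} d ns V X t _.
Arguments T3 {R n} d ns V X t _.
Arguments Wmx {R n} d ns V X t k.
Arguments Wt {R n} d ns V X t _.

(* For c = V (J_k)_k V^T on the flag manifold, the matrices (c_k + 1) / 2 are
   orthogonal projections with (c_k + 1)(c_j + 1) = 2 [k = j] (c_k + 1).
   Differentiating this identity along a curve shows that a tangent vector
   V (Z_k)_k V^T has Z_k supported on the blocks (k, q) and (p, k) with
   p, q <> k, and Z_p(p, q) = - Z_q(p, q).  Hence V (A_k)_k V^T is orthogonal
   to the tangent space as soon as A_p(p, q) = A_q(p, q) off the diagonal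
   blocks.  This holds for T_3, because Lambda and X vanish on the diagonal
   blocks while J_p and J_q agree on every other block, and for T_2 - W,
   whose k-th entry is P J_k + J_k P with P = (X Lambda + Lambda X) / 2.
   Conversely, for a skew Omega the Cayley curve
   C(s) = (1 - s Omega / 2)^-1 (1 + s Omega / 2) is orthogonal and satisfies
   C(s) = 1 + s Omega + s^2 Omega^2 (1 + C(s)) / 4 with C(s) bounded, so
   V C(s) J_k C(s)^T V^T is a curve in the flag manifold with velocity
   V (Omega J_k - J_k Omega) V^T.  This gives (1), and W is tangent because
   W_k = Omega J_k - J_k Omega for Omega = -(X Lambda - Lambda X) / 2. *)

From Pilot Require Import Defs.
From mathcomp Require Import all_boot all_order all_algebra.
From mathcomp Require Import all_classical all_reals all_analysis.
From mathcomp Require Import ring lra.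
Set Implicit Arguments.
Unset Strict Implicit.
Unset Printing Implicit Defensive.

Import Order.TTheory GRing.Theory Num.Theory numFieldNormedType.Exports.
Local Open Scope ring_scope.

Section MatrixCalculus.
Variable R : realType.
Implicit Types (m p : nat) (t : R).

Lemma mxderivable_cst m p (A : 'M[R]_(m, p)) t : mxderivable (fun _ => A) t.
Proof. by move=> i j; exact: derivable_cst. Qed.

Lemma mxderive_cst m p (A : 'M[R]_(m, p)) t : mxderive (fun _ => A) t = 0.
Proof. by apply/matrixP => i j; rewrite !mxE derive1E derive_cst. Qed.

Section Product.
Variables (m p q : nat) (F : R -> 'M[R]_(m, p)) (G : R -> 'M[R]_(p, q)) (t : R).
Hypotheses (dF : mxderivable F t) (dG : mxderivable G t).

Let entryM i j :
  (fun s => (F s *m G s) i j) = \sum_(l < p) ((fun s => F s i l) * (fun s => G s l j)).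
Proof. by rewrite fct_sumE; apply/funext => s; rewrite mxE. Qed.

Lemma mxderivableM : mxderivable (fun s => F s *m G s) t.
Proof. by move=> i j; rewrite entryM; apply: derivable_sum => l; apply: derivableM. Qed.

Lemma mxderiveM :
  mxderive (fun s => F s *m G s) t = mxderive F t *m G t + F t *m mxderive G t.
Proof.
apply/matrixP => i j; rewrite !mxE derive1E entryM derive_sum => [|l]; last first.
  exact: derivableM.
rewrite -big_split; apply: eq_bigr => l _ /=.
by rewrite deriveM // !mxE !derive1E addrC [_ * G t l j]mulrC.
Qed.

End Product.

Section Pointwise.
Variables (m p : nat) (F G : R -> 'M[R]_(m, p)) (t : R).
Hypotheses (dF : mxderivable F t) (dG : mxderivable G t).

Let entryD i j : (fun s => (F s + G s) i j) = (fun s => F s i j) + (fun s => G s i j).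
Proof. by apply/funext => s; rewrite mxE. Qed.

Lemma mxderivableD : mxderivable (fun s => F s + G s) t.
Proof. by move=> i j; rewrite entryD; apply: derivableD. Qed.

Lemma mxderiveD : mxderive (fun s => F s + G s) t = mxderive F t + mxderive G t.
Proof. by apply/matrixP => i j; rewrite !mxE !derive1E entryD deriveD. Qed.

Lemma mxderiveZ (c : R) : mxderive (fun s => c *: F s) t = c *: mxderive F t.
Proof.
apply/matrixP => i j; rewrite !mxE !derive1E.
have -> : (fun s => (c *: F s) i j) = c \*: (fun s => F s i j).
  by apply/funext => s; rewrite mxE.
by rewrite deriveZ.
Qed.

Let entry_tr i j : (fun s => (F s)^T i j) = (fun s => F s j i).
Proof. by apply/funext => s; rewrite mxE. Qed.

Lemma mxderivable_tr : mxderivable (fun s => (F s)^T) t.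
Proof. by move=> i j; rewrite entry_tr. Qed.

Lemma mxderive_tr : mxderive (fun s => (F s)^T) t = (mxderive F t)^T.
Proof. by apply/matrixP => i j; rewrite !mxE entry_tr. Qed.

Lemma mxderivable_mulmx_cst l r (A : 'M[R]_(l, m)) (B : 'M[R]_(p, r)) :
  mxderivable (fun s => A *m F s *m B) t.
Proof. by apply: mxderivableM; [apply: mxderivableM|] => //; exact: mxderivable_cst. Qed.

Lemma mxderive_mulmx_cst l r (A : 'M[R]_(l, m)) (B : 'M[R]_(p, r)) :
  mxderive (fun s => A *m F s *m B) t = A *m mxderive F t *m B.
Proof.
have dA : mxderivable (fun _ => A) t by exact: mxderivable_cst.
have dB : mxderivable (fun _ => B) t by exact: mxderivable_cst.
rewrite (mxderiveM (mxderivableM dA dF) dB) (mxderiveM dA dF) !mxderive_cst.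
by rewrite mul0mx add0r mulmx0 addr0.
Qed.

End Pointwise.

Lemma mxderive_skew n (F : R -> 'M[R]_n) t :
  (forall s, is_skew_mx (F s)) -> mxderivable F t -> is_skew_mx (mxderive F t).
Proof.
move=> skewF dF; rewrite /is_skew_mx -mxderive_tr //.
have -> : (fun s => (F s)^T) = fun s => (-1) *: F s by apply/funext => s; rewrite skewF scaleN1r.
by rewrite mxderiveZ // scaleN1r.
Qed.

Lemma orthogonal_mxderive_skew n (V : R -> 'M[R]_n) t :
  (forall s, is_orthogonal_mx (V s)) -> mxderivable V t ->
  is_skew_mx ((V t)^T *m mxderive V t).
Proof.
move=> VO dV; have := mxderiveM (mxderivable_tr dV) dV.
have -> : (fun s => (V s)^T *m V s) = fun=> 1%:M by apply/funext => s; exact: VO.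
rewrite mxderive_cst mxderive_tr => /esym/eqP; rewrite addr_eq0 => /eqP.
by rewrite /is_skew_mx trmx_mul trmxK.
Qed.

End MatrixCalculus.

Section QuadraticRemainder.
Variable R : realType.
Local Open Scope classical_set_scope.

Lemma derive1_quadratic_remainder (f q : R -> R) (a b C : R) :
  (forall s, f s = a + s * b + s ^+ 2 * q s) ->
  (forall s, `|s| <= 1 -> `|q s| <= C) ->
  derivable f 0 1 /\ derive1 f 0 = b.
Proof.
move=> fE qC.
have slope : {near (0 : R)^', (fun h => b + h * q h) =1 (fun h => h^-1 *: (f (h *: 1 + 0) - f 0))}.
  near=> h; have h0 : h != 0 by near: h; exact: nbhs_dnbhs_neq.
  by rewrite !fE -[h%:A]/(h * 1) -[_ *: _]/(_ * _) addr0 mulr1; field.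
have vanish : (fun h => h * q h) @ (0 : R)^' --> (0 : R).
  apply/cvgr0Pnorm_lt => e e0; have C1 : 0 < `|C| + 1 by rewrite ltr_wpDl.
  near=> h.
  have h1 : `|h| < 1 by near: h; apply: dnbhs0_lt.
  have he : `|h| < e / (`|C| + 1) by near: h; apply: dnbhs0_lt; rewrite divr_gt0.
  rewrite normrM (@le_lt_trans _ _ (`|h| * (`|C| + 1))) -?ltr_pdivlMr //.
  by rewrite ler_wpM2l // (le_trans (qC h (ltW h1))) // (le_trans (ler_norm C)) ?lerDl.
have lim : (fun h => h^-1 *: (f (h *: 1 + 0) - f 0)) @ (0 : R)^' --> b.
  apply: cvg_trans (near_eq_cvg slope) _.
  by have := cvgD (cvg_cst b) vanish; rewrite addr0; apply; exact: dnbhs_filter.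
split; first by apply/cvg_ex; exists b.
by rewrite derive1E; apply: cvg_lim.
Unshelve. all: by end_near.
Qed.

Lemma mxderive_quadratic_remainder m p (F Q : R -> 'M[R]_(m, p)) (A B : 'M[R]_(m, p)) :
  (forall s, F s = A + s *: B + s ^+ 2 *: Q s) ->
  (forall i j, exists C, forall s, `|s| <= 1 -> `|Q s i j| <= C) ->
  mxderivable F 0 /\ mxderive F 0 = B.
Proof.
move=> FE Qbound.
have entry i j : derivable (fun s => F s i j) 0 1 /\ derive1 (fun s => F s i j) 0 = B i j.
  have [C QC] := Qbound i j.
  by apply: (derive1_quadratic_remainder _ QC) => s; rewrite FE !mxE.
by split=> [i j|]; [case: (entry i j) | apply/matrixP => i j; rewrite mxE; case: (entry i j)].
Qed.

End QuadraticRemainder.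

Section Cayley.
Variables (R : realType) (n : nat).
Implicit Types (A V Om : 'M[R]_n) (s : R).

Lemma orthogonal_entry_le1 V : is_orthogonal_mx V -> forall i j, `|V i j| <= 1.
Proof.
move=> VTV i j; have col_norm : \sum_l V l j ^+ 2 = 1.
  transitivity ((V^T *m V) j j); last by rewrite VTV mxE eqxx.
  by rewrite mxE; apply: eq_bigr => l _; rewrite mxE expr2.
have : V i j ^+ 2 <= 1.
  by rewrite -col_norm (bigD1 i) //= lerDl sumr_ge0 // => l _; rewrite sqr_ge0.
by rewrite ler_norml expr2 => ?; apply/andP; split; nra.
Qed.

Lemma unitmx_1B_skew A : is_skew_mx A -> 1%:M - A \in unitmx.
Proof.
move=> AT; rewrite unitmxE unitfE; apply/det0P => -[v v0 vA].
have vAv : v *m A = v by apply/eqP; rewrite eq_sym -subr_eq0 -{1}(mulmx1 v) -mulmxBr vA.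
have skew_form : (v *m A *m v^T) 0 0 = 0.
  have : (v *m A *m v^T)^T = - (v *m A *m v^T).
    by rewrite !trmx_mul trmxK AT mulNmx mulmxN mulmxA.
  by move/matrixP/(_ 0 0); rewrite !mxE => /eqP; rewrite -addr_eq0 -mulr2n mulrn_eq0 => /eqP.
have : \sum_l v 0 l ^+ 2 = 0.
  transitivity ((v *m v^T) 0 0); last by rewrite -{1}vAv.
  by rewrite mxE; apply: eq_bigr => l _; rewrite mxE expr2.
move/eqP; rewrite psumr_eq0 => [/allP v_eq0|l _]; last exact: sqr_ge0.
case/eqP: v0; apply/matrixP => i l; rewrite (ord1 i) mxE.
by apply/eqP; rewrite -sqrf_eq0; apply: (implyP (v_eq0 l (mem_index_enum l))).
Qed.

Definition cayley Om s : 'M[R]_n :=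
  invmx (1%:M - (s / 2) *: Om) *m (1%:M + (s / 2) *: Om).

Section SkewCayley.
Variable Om : 'M[R]_n.
Hypothesis skewOm : is_skew_mx Om.

Lemma cayley_orthogonal s : is_orthogonal_mx (cayley Om s).
Proof.
rewrite /is_orthogonal_mx /cayley; set M := 1%:M - _; set N := 1%:M + _.
have skewZ c : is_skew_mx (c *: Om) by rewrite /is_skew_mx linearZ /= skewOm scalerN.
have uM : M \in unitmx by exact: unitmx_1B_skew.
have uN : N \in unitmx.
  by rewrite /N -[_ *: Om]opprK -scaleNr; exact: unitmx_1B_skew.
have MT : M^T = N by rewrite linearB /= trmx1 skewZ opprK.
have NT : N^T = M by rewrite linearD /= trmx1 skewZ.
have MN : M *m N = N *m M.
  by apply: comm_mxD; [exact: comm_mx1 | apply/comm_mx_sym/comm_mxB; [exact: comm_mx1|]].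
have MNV : M *m invmx N = invmx N *m M.
  by rewrite -[LHS](mulKmx uN) [N *m _]mulmxA -MN mulmxK.
rewrite trmx_mul trmx_inv MT NT MNV.
by rewrite !mulmxA mulmxK // mulVmx.
Qed.

Lemma cayley_expansion s : cayley Om s =
  1%:M + s *: Om + s ^+ 2 *: (4^-1 *: (Om *m Om *m (1%:M + cayley Om s))).
Proof.
have MU : (1%:M - (s / 2) *: Om) *m cayley Om s = 1%:M + (s / 2) *: Om.
  by rewrite /cayley mulKVmx //; apply: unitmx_1B_skew; rewrite /is_skew_mx linearZ /= skewOm scalerN.
have fixpt : cayley Om s = 1%:M + (s / 2) *: (Om *m (1%:M + cayley Om s)).
  by rewrite mulmxDr mulmx1 scalerDr addrA -MU mulmxBl mul1mx -scalemxAl subrK.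
rewrite {1}fixpt {1}fixpt; move: (1%:M + cayley Om s) => P.
rewrite -addrA; congr (_ + _).
rewrite addrA !mulmxDr !mulmx1 -scalemxAr mulmxA !scalerDr !scalerA -scalerDl.
by congr (_ + _); congr (_ *: _); field.
Qed.

Lemma cayley0 : cayley Om 0 = 1%:M.
Proof. by rewrite /cayley mul0r scale0r subr0 addr0 invmx1 mulmx1. Qed.

Lemma cayley_derive : mxderivable (cayley Om) 0 /\ mxderive (cayley Om) 0 = Om.
Proof.
apply: (mxderive_quadratic_remainder cayley_expansion) => i j.
exists (4^-1 * \sum_l `|(Om *m Om) i l| * 2) => s _.
rewrite mxE normrM ger0_norm // ler_wpM2l // mxE.
apply: le_trans (ler_norm_sum _ _ _) _; apply: ler_sum => l _.
rewrite normrM ler_wpM2l // mxE; apply: le_trans (ler_normD _ _) _; apply: lerD.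
  by rewrite mxE; case: (_ == _); rewrite ?normr1 ?normr0.
exact/orthogonal_entry_le1/cayley_orthogonal.
Qed.

End SkewCayley.
End Cayley.

Section Flag.
Variables (R : realType) (n d : nat) (ns : nat -> nat).
Local Notation blk := (blk d ns).
Local Notation J := (@Jmx R n d ns).
Local Notation mxtuple := (mxtuple R n d).
Implicit Types (A Om : 'M[R]_n) (c Y : mxtuple) (k j : 'I_d.+1) (a b : 'I_n).

Lemma blk_ltn i : (blk i < d.+1)%N.
Proof.
rewrite /Defs.blk ltnS; apply: (@leq_trans (\sum_(1 <= k < d.+1) 1)).
  by apply: leq_sum => k _; exact: leq_b1.
by rewrite sum_nat_const_nat muln1 subn1.
Qed.

Definition blk_ord (i : nat) : 'I_d.+1 := Ordinal (blk_ltn i).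

Definition Jsign k (i : nat) : R := if blk i == k then 1 else -1.

Lemma JmxE k : J k = diag_mx (\row_i Jsign k i).
Proof. by apply/matrixP => a b; rewrite !mxE; case: eqP => [->|]; rewrite ?mulr1n ?mulr0n. Qed.

Lemma mulmxJ A k a b : (A *m J k) a b = A a b * Jsign k b.
Proof. by rewrite JmxE mul_mx_diag !mxE. Qed.

Lemma mulJmx A k a b : (J k *m A) a b = Jsign k a * A a b.
Proof. by rewrite JmxE mul_diag_mx !mxE. Qed.

Lemma Jsign_blk_ord i : Jsign (blk_ord i) i = 1.
Proof. by rewrite /Jsign eqxx. Qed.

Lemma Jsign_blk_ord_neq i l : blk i != blk l -> Jsign (blk_ord l) i = -1.
Proof. by rewrite /Jsign /= => /negbTE ->. Qed.

Lemma Jsign_add1_mul k j (i : nat) :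
  (Jsign k i + 1) * (Jsign j i + 1) = (k == j)%:R * 2 * (Jsign k i + 1).
Proof.
rewrite /Jsign; have [<-|kj] := eqVneq k j; first by rewrite mulr1n; case: ifP; lra.
rewrite mulr0n !mul0r; case: ifP => [/eqP ik|_]; last by rewrite addNr mul0r.
have /negbTE -> : blk i != j by apply: contra kj; rewrite ik => /eqP e; apply/eqP/val_inj.
by rewrite addNr mulr0.
Qed.

Lemma Jmx_add1_mul k j :
  (J k + 1%:M) *m (J j + 1%:M) = ((k == j)%:R * 2) *: (J k + 1%:M).
Proof.
have add1E l : J l + 1%:M = diag_mx (\row_i (Jsign l i + 1)).
  by rewrite JmxE -diag_const_mx -raddfD; congr diag_mx; apply/matrixP => ? ?; rewrite !mxE.
rewrite !add1E mul_diag_mx; apply/matrixP => a b; rewrite !mxE.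
by case: (a == b); rewrite ?mulr0n ?mulr0 // !mulr1n Jsign_add1_mul.
Qed.

Lemma mulmxJ1 A k a b : (A *m (J k + 1%:M)) a b = A a b * (Jsign k b + 1).
Proof. by rewrite mulmxDr mulmx1 mxE mulmxJ mulrDr mulr1. Qed.

Lemma mulJ1mx A k a b : ((J k + 1%:M) *m A) a b = (Jsign k a + 1) * A a b.
Proof. by rewrite mulmxDl mul1mx mxE mulJmx mulrDl mul1r. Qed.

Lemma flag_pt_proj c k j : flag_pt d ns c ->
  (c k + 1%:M) *m (c j + 1%:M) = ((k == j)%:R * 2) *: (c k + 1%:M).
Proof.
case=> W [WW cE]; have WWT : W *m W^T = 1%:M by apply: mulmx1C.
have add1 l : c l + 1%:M = W *m (J l + 1%:M) *m W^T by rewrite cE mulmxDr mulmxDl mulmx1 WWT.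
rewrite !add1 !mulmxA -(mulmxA _ W^T W) WW mulmx1 -(mulmxA W) Jmx_add1_mul.
by rewrite -scalemxAr -scalemxAl.
Qed.

Lemma tangent_flag_proj c Y k j : tangent_flag d ns c Y ->
  Y k *m (c j + 1%:M) + (c k + 1%:M) *m Y j = ((k == j)%:R * 2) *: Y k.
Proof.
case=> g [gflag [g0 [dg g']]].
have dg1 l : mxderivable (fun s => g s l + 1%:M) 0.
  by apply: mxderivableD; [exact: dg | exact: mxderivable_cst].
have dg1' l : mxderive (fun s => g s l + 1%:M) 0 = Y l.
  by rewrite mxderiveD ?mxderive_cst ?addr0 ?g' //; exact: mxderivable_cst.
have := congr1 (fun F => mxderive F 0) (funext (fun s => flag_pt_proj k j (gflag s))).
by rewrite /= mxderiveM // mxderiveZ // !dg1' !g0.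
Qed.

Section Conjugation.
Variable V : 'M[R]_n.
Hypothesis VV : is_orthogonal_mx V.

Let VVT : V *m V^T = 1%:M. Proof. exact: mulmx1C. Qed.

Let conjM A B : (V *m A *m V^T) *m (V *m B *m V^T) = V *m (A *m B) *m V^T.
Proof. by rewrite !mulmxA -(mulmxA _ V^T V) VV mulmx1. Qed.

Let unconj A : V^T *m (V *m A *m V^T) *m V = A.
Proof. by rewrite !mulmxA VV mul1mx -mulmxA VV mulmx1. Qed.

Lemma tangent_flag_conj (Z : mxtuple) k j :
  tangent_flag d ns (fun l => V *m J l *m V^T) (fun l => V *m Z l *m V^T) ->
  Z k *m (J j + 1%:M) + (J k + 1%:M) *m Z j = ((k == j)%:R * 2) *: Z k.
Proof.
have add1 l : V *m J l *m V^T + 1%:M = V *m (J l + 1%:M) *m V^T.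
  by rewrite mulmxDr mulmxDl mulmx1 VVT.
move/(tangent_flag_proj k j); rewrite !add1 !conjM -mulmxDl -mulmxDr.
by rewrite scalemxAl scalemxAr => /(congr1 (fun M => V^T *m M *m V)); rewrite !unconj.
Qed.

Lemma frob_conj (A B : mxtuple) :
  frob (fun k => V *m A k *m V^T) (fun k => V *m B k *m V^T) = frob A B.
Proof.
apply: eq_bigr => k _; rewrite !trmx_mul trmxK [V *m (_ *m V^T)]mulmxA conjM.
by rewrite mxtrace_mulC [V^T *m _]mulmxA VV mul1mx.
Qed.

Lemma tangent_flag_commutator Om : is_skew_mx Om ->
  tangent_flag d ns (fun k => V *m J k *m V^T) (fun k => V *m (Om *m J k - J k *m Om) *m V^T).
Proof.
move=> skewOm; have [dU U'] := cayley_derive skewOm.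
have dJ k : mxderivable (fun=> J k) 0 by exact: mxderivable_cst.
have dUJ k := mxderivableM dU (dJ k); have dUT := mxderivable_tr dU.
exists (fun s k => V *m (cayley Om s *m J k *m (cayley Om s)^T) *m V^T); split; [|split; [|split]].
- move=> s /=; exists (V *m cayley Om s); split; last by move=> k; rewrite [(V *m _)^T]trmx_mul !mulmxA.
  rewrite /is_orthogonal_mx trmx_mul -mulmxA (mulmxA V^T) VV mul1mx.
  exact: cayley_orthogonal.
- by move=> k; rewrite cayley0 trmx1 mulmx1 mul1mx.
- by move=> k; apply/mxderivable_mulmx_cst/mxderivableM.
move=> k; rewrite mxderive_mulmx_cst; last exact: mxderivableM.
rewrite (mxderiveM (dUJ k) dUT) (mxderiveM dU (dJ k)) mxderive_tr // mxderive_cst U' cayley0.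
by rewrite trmx1 skewOm mulmx0 addr0 !mulmx1 mul1mx mulmxN.
Qed.

Section StandardTangent.
Variable Z : mxtuple.
Hypothesis ZT : tangent_flag d ns (fun l => V *m J l *m V^T) (fun l => V *m Z l *m V^T).

Let Zentry k j a b :
  Z k a b * (Jsign j b + 1) + (Jsign k a + 1) * Z j a b = (k == j)%:R * 2 * Z k a b.
Proof.
have := congr1 (fun M : 'M[R]_n => M a b) (tangent_flag_conj k j ZT).
by rewrite mxE mulmxJ1 mulJ1mx [RHS]mxE.
Qed.

Lemma tangent_flag_conj_diag k a b : (blk a == k) = (blk b == k) -> Z k a b = 0.
Proof.
by move=> e; move: (Zentry k k a b); rewrite eqxx mulr1n /Jsign e; case: ifP; lra.
Qed.

Lemma tangent_flag_conj_offdiag a b : blk a != blk b ->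
  Z (blk_ord a) a b = - Z (blk_ord b) a b.
Proof.
move=> ab; have ne : blk_ord a != blk_ord b by apply: contra ab => /eqP/(congr1 val) /= ->.
by move: (Zentry (blk_ord a) (blk_ord b) a b); rewrite !Jsign_blk_ord (negbTE ne) mulr0n; lra.
Qed.

End StandardTangent.

Lemma frobE (A B : mxtuple) : frob A B = \sum_k \sum_b \sum_a A k a b * B k a b.
Proof.
apply: eq_bigr => k _; apply: eq_bigr => b _; rewrite mxE.
by apply: eq_bigr => a _; rewrite mxE.
Qed.

Lemma frob_tangent_flag_eq0 (A Y : mxtuple) :
  tangent_flag d ns (fun k => V *m J k *m V^T) Y ->
  (forall a b, blk a != blk b -> A (blk_ord a) a b = A (blk_ord b) a b) ->
  frob (fun k => V *m A k *m V^T) Y = 0.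
Proof.
pose Z k := V^T *m Y k *m V.
have -> : Y = fun k => V *m Z k *m V^T.
  by apply/funext => k; rewrite /Z !mulmxA VVT mul1mx -mulmxA VVT mulmx1.
move=> ZT Abal; rewrite frob_conj frobE exchange_big; apply: big1 => b _.
rewrite exchange_big; apply: big1 => a _.
have [ab|ab] := eqVneq (blk a) (blk b).
  by apply: big1 => k _; rewrite (tangent_flag_conj_diag ZT) ?mulr0 // ab.
have ne : blk_ord a != blk_ord b by apply: contra ab => /eqP/(congr1 val) /= ->.
rewrite (bigD1 (blk_ord a)) // (bigD1 (blk_ord b)) 1?eq_sym //= big1 ?addr0 => [|k /andP[ka kb]].
  by rewrite (tangent_flag_conj_offdiag ZT) // Abal // mulrN addNr.
have notk i : blk_ord i != k -> (blk i == k) = false.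
  by move=> ik; apply: contraNF ik => /eqP e; apply/eqP/val_inj.
by rewrite (tangent_flag_conj_diag ZT) ?mulr0 // !notk // eq_sym.
Qed.

Lemma frob_tangent_flag_anticommutator (P : 'M[R]_n) Y :
  tangent_flag d ns (fun k => V *m J k *m V^T) Y ->
  frob (fun k => V *m (P *m J k + J k *m P) *m V^T) Y = 0.
Proof.
move=> YT; apply: frob_tangent_flag_eq0 => // a b ab.
rewrite [LHS]mxE [RHS]mxE !mulmxJ !mulJmx !Jsign_blk_ord !Jsign_blk_ord_neq // 1?eq_sym //.
by rewrite mulrN1 mulN1r mulr1 mul1r addNr addrN.
Qed.

Lemma tangent_flag0 : tangent_flag d ns (fun k => V *m J k *m V^T) (fun _ => 0).
Proof.
have skew0 : is_skew_mx (0 : 'M[R]_n) by rewrite /is_skew_mx trmx0 oppr0.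
suff -> : (fun _ => 0) = fun k => V *m (0 *m J k - J k *m 0) *m V^T.
  exact: tangent_flag_commutator skew0.
by apply/funext => k; rewrite mul0mx mulmx0 subrr mulmx0 mul0mx.
Qed.

End Conjugation.

Lemma mulmx_Jblk_ord (L M : 'M[R]_n) a b :
  (forall a b, blk a = blk b -> L a b = 0) -> (forall a b, blk a = blk b -> M a b = 0) ->
  blk a != blk b -> (L *m J (blk_ord a) *m M) a b = (L *m J (blk_ord b) *m M) a b.
Proof.
move=> L0 M0 ab; rewrite [LHS]mxE [RHS]mxE; apply: eq_bigr => m _; rewrite !mulmxJ.
have [am|am] := eqVneq (blk a) (blk m); first by rewrite L0 ?mul0r.
have [mb|mb] := eqVneq (blk m) (blk b); first by rewrite M0 ?mulr0.
by rewrite !Jsign_blk_ord_neq // eq_sym.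
Qed.

Section Curves.
Variables (V X : R -> 'M[R]_n) (t : R).
Local Notation L := (Lam V t).

Definition Wgen : 'M[R]_n := - 2^-1 *: (X t *m L - (X t *m L)^T).

Lemma Wgen_skew : is_skew_mx Wgen.
Proof. by rewrite /is_skew_mx /Wgen linearZ /= linearB /= trmxK -scalerN opprB. Qed.

Lemma Wt_commutator :
  Wt d ns V X t = fun k => V t *m (Wgen *m J k - J k *m Wgen) *m (V t)^T.
Proof.
apply/funext => k; congr (_ *m _ *m _); apply/matrixP => a b.
rewrite [RHS]mxE [E in _ + E]mxE mulmxJ mulJmx /Wgen !mxE /Jsign.
have -> : \sum_l L l a * X t b l = \sum_l X t b l * L l a.
  by apply: eq_bigr => l _; rewrite mulrC.
by case: (blk a == k); case: (blk b == k) => /=; lra.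
Qed.

Lemma T2_sub_Wt : is_skew_mx (X t) -> is_skew_mx L ->
  let P := 2^-1 *: (X t *m L + L *m X t) in
  (fun k => T2 d ns V X t k - Wt d ns V X t k) = fun k => V t *m (P *m J k + J k *m P) *m (V t)^T.
Proof.
move=> skewX skewL P; apply/funext => k; rewrite /T2 Wt_commutator -mulmxBl -mulmxBr.
congr (_ *m _ *m _).
have XLT : (X t *m L)^T = L *m X t by rewrite trmx_mul skewL skewX mulmxN mulNmx opprK.
have LXW : L *m X t - Wgen = P by apply/matrixP => a b; rewrite /P /Wgen XLT !mxE; lra.
have XLW : X t *m L + Wgen = P by apply/matrixP => a b; rewrite /P /Wgen XLT !mxE; lra.
by rewrite -{1}LXW -XLW mulmxBl mulmxDr mulmxA addrACA opprB [- _ + _]addrC.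
Qed.

End Curves.

End Flag.

Theorem lemmaB1 (R : realType) (n d : nat) (ns : nat -> nat)
  (hd : (0 < d)%N) (h1 : (0 < ns 1)%N)
  (hinc : forall k, (1 <= k < d)%N -> (ns k < ns k.+1)%N)
  (hn : (ns d < n)%N)
  (V X : R -> 'M[R]_n)
  (hVo : forall t, is_orthogonal_mx (V t)) (hVd : forall t, mxderivable V t)
  (hL : forall t (i j : 'I_n), blk d ns i = blk d ns j -> Lam V t i j = 0)
  (hXs : forall t, is_skew_mx (X t)) (hXd : forall t, mxderivable X t)
  (hX : forall t (i j : 'I_n), blk d ns i = blk d ns j -> X t i j = 0)
  (t : R) :
  tangent_flag d ns (cflag d ns V t) (T1 d ns V X t) /\
  is_orth_proj (tangent_flag d ns (cflag d ns V t)) (T2 d ns V X t) (Wt d ns V X t) /\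
  is_orth_proj (tangent_flag d ns (cflag d ns V t)) (T3 d ns V X t) (fun _ => 0).
Proof.
have VO := hVo t; have skewL := orthogonal_mxderive_skew hVo (hVd t).
split; first exact (tangent_flag_commutator d ns VO (mxderive_skew hXs (hXd t))).
split; split.
- by rewrite Wt_commutator; exact (tangent_flag_commutator d ns VO (Wgen_skew V X t)).
- by move=> Y YT; rewrite T2_sub_Wt //; exact: frob_tangent_flag_anticommutator.
- exact (tangent_flag0 d ns VO).
move=> Y YT; have -> : (fun k => T3 d ns V X t k - 0) = T3 d ns V X t.
  by apply/funext => k; rewrite subr0.
apply: (frob_tangent_flag_eq0 VO YT) => a b ab.
by rewrite [LHS]mxE [RHS]mxE (mulmx_Jblk_ord (hL t) (hX t) ab) (mulmx_Jblk_ord (hX t) (hL t) ab).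
Qed.
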